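(* Let $G$ be a finitely generated group, $(\mathfrak C,D,\mathfrak B)$ a differential category over $\mathbb F$ (where $\mathbb F=\mathbb R$ or $\mathbb C$), and $R$ a representation of $G$ in $\mathfrak C$. Then either (i) $R$ is trivial, or (ii) $D\circ R$ is non-trivial, or (iii) there exists a non-trivial representation of $G$ in $\mathbb F$, i.e. a non-trivial group homomorphism $G\to(\mathbb F,+)$.
   Context: A right linear category over $\mathbb F$ is a category $\mathfrak C$ in which each hom set $\mathfrak C(a,a')$ is an $\mathbb F$-vector space (with zero $0_{a',a}$), such that for every $c\in\mathfrak C(a,a')$ the map $-\circ c:\mathfrak C(a',a'')\to\mathfrak C(a,a'')$ is linear, and $f\circ 0_{a',a}=0_{a'',a}$ for all $f\in\mathfrak C(a',a'')$. A linear category additionally satisfies the dual conditions ($c\circ-$ linear and $0\circ f=0$). A norm on $\mathfrak C$ is a choice of norm on each hom space; it is submultiplicative if $\|1_a\|=1$ and $\|c'\circ c\|\le\|c'\|\|c\|$. A Banach category is a linear category with a submultiplicative norm for which every hom space is complete. A functor between right linear categories is linear if it is linear on each hom space. A $\mathfrak B$-differential on a right linear category $\mathfrak C$ is a linear functor $D:\mathfrak C\to\mathfrak B$ into a Banach category $\mathfrak B$ for which there exists a sequence $(\|\cdot\|_n)_{n\ge1}$ of norms on $\mathfrak C$ (norms on each hom space) with $\limsup_{n\to\infty}\frac{\|c\circ c'-c\circ c''\|_n}{\|c'-c''\|_n}\le\|Dc\|$ for all $c\in\mathfrak C(a',a'')$ and all distinct $c',c''\in\mathfrak C(a,a')$;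 a differential category is such a triple $(\mathfrak C,D,\mathfrak B)$. A representation of the group $G$ in a category $\mathfrak C$ is a functor from $G$ (viewed as a one-object groupoid) to $\mathfrak C$, i.e. a homomorphism $R:G\to\mathfrak C^{-1}(a,a)$ into the group of invertible endomorphisms of some object $a$; it is trivial if it is constant (equal to $1_a$). *)

From Stdlib Require Import Reals List.
From Coquelicot Require Export Coquelicot.
Open Scope R_scope.

Record Group := {
  gcar :> Type;
  gmul : gcar -> gcar -> gcar;
  gone : gcar;
  ginv : gcar -> gcar;
  gmul_assoc : forall x y z, gmul x (gmul y z) = gmul (gmul x y) z;
  gmul_1l : forall x, gmul gone x = x;
  gmul_Vl : forall x, gmul (ginv x) x = gone
}.

Inductive generated (G : Group) (S : list (gcar G)) : gcar G -> Prop :=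
| gen_in : forall x, In x S -> generated G S x
| gen_one : generated G S (gone G)
| gen_mul : forall x y, generated G S x -> generated G S y -> generated G S (gmul G x y)
| gen_inv : forall x, generated G S x -> generated G S (ginv G x).

Definition finitely_generated (G : Group) : Prop :=
  exists S : list (gcar G), forall g, generated G S g.

Record VCategory (K : AbsRing) := {
  Obj : Type;
  Hom : Obj -> Obj -> ModuleSpace K;
  comp : forall a b c, Hom b c -> Hom a b -> Hom a c;
  idm : forall a, Hom a a;
  comp_assoc : forall a b c d (h : Hom c d) (g : Hom b c) (f : Hom a b),
      comp a c d h (comp a b c g f) = comp a b d (comp b c d h g) f;
  comp_id_l : forall a b (f : Hom a b), comp a b b (idm b) f = f;
  comp_id_r : forall a b (f : Hom a b), comp a a b f (idm a) = f
}.
Arguments Obj {K}. Arguments Hom {K}. Arguments comp {K} v {a b c}. Arguments idm {K} v.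

Definition is_linear {K : AbsRing} {V W : ModuleSpace K} (f : V -> W) : Prop :=
  (forall x y, f (plus x y) = plus (f x) (f y)) /\
  (forall (k : K) x, f (scal k x) = scal k (f x)).

Definition right_linear {K : AbsRing} (C : VCategory K) : Prop :=
  (forall a a' a'' (c : Hom C a a'), is_linear (fun f : Hom C a' a'' => comp C f c)) /\
  (forall a a' a'' (f : Hom C a' a''), comp C f (zero : Hom C a a') = zero).

Definition linear_cat {K : AbsRing} (C : VCategory K) : Prop :=
  right_linear C /\
  (forall a a' a'' (c : Hom C a' a''), is_linear (fun f : Hom C a a' => comp C c f)) /\
  (forall a a' a'' (f : Hom C a a'), comp C (zero : Hom C a' a'') f = zero).

Definition is_norm {K : AbsRing} {V : ModuleSpace K} (n : V -> R) : Prop :=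
  (forall x, 0 <= n x) /\
  (forall x, n x = 0 <-> x = zero) /\
  (forall (k : K) x, n (scal k x) = abs k * n x) /\
  (forall x y, n (plus x y) <= n x + n y).

Definition complete_wrt {K : AbsRing} {V : ModuleSpace K} (n : V -> R) : Prop :=
  forall u : nat -> V,
    (forall eps, 0 < eps -> exists N, forall p q, (N <= p)%nat -> (N <= q)%nat ->
        n (minus (u p) (u q)) < eps) ->
    exists l : V, forall eps, 0 < eps -> exists N, forall p, (N <= p)%nat ->
        n (minus (u p) l) < eps.

Definition cat_norm {K : AbsRing} (C : VCategory K) :=
  forall a b : Obj C, Hom C a b -> R.

Definition is_cat_norm {K : AbsRing} (C : VCategory K) (nrm : cat_norm C) : Prop :=
  forall a b, is_norm (nrm a b).

Definition submultiplicative {K : AbsRing} (C : VCategory K) (nrm : cat_norm C) : Prop :=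
  (forall a, nrm a a (idm C a) = 1) /\
  (forall a a' a'' (c' : Hom C a' a'') (c : Hom C a a'),
      nrm a a'' (comp C c' c) <= nrm a' a'' c' * nrm a a' c).

Definition banach_cat {K : AbsRing} (B : VCategory K) (nrm : cat_norm B) : Prop :=
  linear_cat B /\ is_cat_norm B nrm /\ submultiplicative B nrm /\
  (forall a b, complete_wrt (nrm a b)).

Record Functor {K : AbsRing} (C B : VCategory K) := {
  Fob : Obj C -> Obj B;
  Fmor : forall a b, Hom C a b -> Hom B (Fob a) (Fob b);
  Fcomp : forall a b c (g : Hom C b c) (f : Hom C a b),
      Fmor a c (comp C g f) = comp B (Fmor b c g) (Fmor a b f);
  Fid : forall a, Fmor a a (idm C a) = idm B (Fob a)
}.
Arguments Fob {K C B}. Arguments Fmor {K C B} f0 {a b}.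

Definition linear_functor {K : AbsRing} {C B : VCategory K} (D : Functor C B) : Prop :=
  forall a b, is_linear (@Fmor K C B D a b).

Definition differential_category {K : AbsRing} (C B : VCategory K) (nrmB : cat_norm B)
    (D : Functor C B) : Prop :=
  right_linear C /\ banach_cat B nrmB /\ linear_functor D /\
  exists nrms : nat -> cat_norm C,
    (forall n, (1 <= n)%nat -> is_cat_norm C (nrms n)) /\
    (forall a a' a'' (c : Hom C a' a'') (c' c'' : Hom C a a'),
        c' <> c'' ->
        Rbar_le
          (LimSup_seq (fun n => nrms n a a'' (minus (comp C c c') (comp C c c''))
                                / nrms n a a' (minus c' c'')))
          (Finite (nrmB _ _ (Fmor D c)))).

(* a functor from G (one-object groupoid) to C, landing at the object a *)
Definition is_representation (G : Group) {K : AbsRing} (C : VCategory K) (a : Obj C)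
    (Rp : gcar G -> Hom C a a) : Prop :=
  Rp (gone G) = idm C a /\
  forall g h, Rp (gmul G g h) = comp C (Rp g) (Rp h).

Definition trivial_rep (G : Group) {K : AbsRing} (C : VCategory K) (a : Obj C)
    (Rp : gcar G -> Hom C a a) : Prop :=
  forall g, Rp g = idm C a.

Definition additive_hom (G : Group) {K : AbsRing} (phi : gcar G -> K) : Prop :=
  forall g h, phi (gmul G g h) = plus (phi g) (phi h).

(* Put u g = R g - 1.  As D (R g) = 1, the morphism R g - 1 is killed by D, so by the
   differential condition composing with it is asymptotically negligible; since
   u (g h) = u g + u h + (R g - 1) (R h - 1), u is additive up to o(|u h|_n).  Measured
   against M_n, the sum of the |u s|_n over the generators s, every u g is then, up to
   o(M_n), a real combination of the u s, with a coefficient vector that is additive in g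
   modulo the subspace N of vectors x with sum_s x_s u_s = o(M_n).  If R is non-trivial,
   M_n > 0, so N misses some unit vector, and a linear functional vanishing on N but not
   on that vector turns g into a non-trivial homomorphism G -> R, hence G -> F. *)

From Stdlib Require Import Reals Lra Lia Classical ClassicalEpsilon List.
(* After [Reals], whose [comp] would otherwise shadow composition in a category. *)

Definition shift (x : nat -> R) : nat -> R := fun i => x (S i).

Definition vcons (r : R) (x : nat -> R) : nat -> R :=
  fun i => match i with O => r | S j => x j end.

Definition vadd (x y : nat -> R) : nat -> R := fun i => x i + y i.

Definition vscale (c : R) (x : nat -> R) : nat -> R := fun i => c * x i.

Fixpoint unitv (i : nat) : nat -> R :=
  match i with O => vcons 1 (fun _ => 0) | S j => vcons 0 (unitv j) end.

Fixpoint dot (m : nat) (a x : nat -> R) : R :=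
  match m with O => 0 | S m' => a O * x O + dot m' (shift a) (shift x) end.

Lemma dot_plus m : forall a x y, dot m a (vadd x y) = dot m a x + dot m a y.
Proof.
  induction m as [|m IH]; intros a x y; simpl; [lra|].
  change (shift (vadd x y)) with (vadd (shift x) (shift y)).
  rewrite IH. unfold vadd. lra.
Qed.

Lemma dot_scale m : forall a c x, dot m a (vscale c x) = c * dot m a x.
Proof.
  induction m as [|m IH]; intros a c x; simpl; [lra|].
  change (shift (vscale c x)) with (vscale c (shift x)).
  rewrite IH. unfold vscale. lra.
Qed.

Lemma dot_vcons m r a x : dot (S m) (vcons r a) x = r * x O + dot m a (shift x).
Proof. reflexivity. Qed.

Lemma dot_0l m : forall x, dot m (fun _ => 0) x = 0.
Proof. induction m as [|m IH]; intros x; simpl; [|rewrite IH]; lra. Qed.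

(* Sets of vectors of R^m, encoded as sequences of which only the first m
   coordinates matter. *)
Record subspace (m : nat) (N : (nat -> R) -> Prop) : Prop := {
  subspace0 : N (fun _ => 0);
  subspaceD : forall x y, N x -> N y -> N (vadd x y);
  subspaceZ : forall c x, N x -> N (vscale c x);
  subspace_ext : forall x y, (forall i, (i < m)%nat -> x i = y i) -> N x -> N y
}.

Definition separates (m : nat) (N : (nat -> R) -> Prop) (e a : nat -> R) : Prop :=
  (forall z, N z -> dot m a z = 0) /\ dot m a e <> 0.

Lemma subspace_tail m N :
  subspace (S m) N -> subspace m (fun y => N (vcons 0 y)).
Proof.
  intros [H0 HD HZ Hext]. split.
  - apply (Hext (fun _ => 0)); [intros [|i] _|]; simpl; auto.
  - intros x y Hx Hy. apply (Hext (vadd (vcons 0 x) (vcons 0 y))); [|auto].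
    intros [|i] _; unfold vadd; simpl; lra.
  - intros c x Hx. apply (Hext (vscale c (vcons 0 x))); [|auto].
    intros [|i] _; unfold vscale; simpl; lra.
  - intros x y Hxy. apply Hext. intros [|i] Hi; simpl; auto. apply Hxy. lia.
Qed.

(* Gaussian elimination of the first coordinate by a vector [w] of [N]:
   [x - x 0 * w] has head [0] for the relevant [x]. *)
Section HeadElimination.
Variables (m : nat) (N : (nat -> R) -> Prop) (w e : nat -> R).
Hypotheses (HN : subspace (S m) N) (Hw : N w).
Hypothesis w_head : forall x, (N x \/ x = e) -> x O = x O * w O.

Let elim x := shift (vadd x (vscale (- x O) w)).
Let N' y := N (vcons 0 y).

Lemma head_elim_in x : N x -> N' (elim x).
Proof.
  intros Hx. apply (subspace_ext _ _ HN (vadd x (vscale (- x O) w))).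
  - intros [|i] _; unfold elim, vadd, vscale, shift; simpl; [|lra].
    rewrite (w_head x (or_introl Hx)) at 1. lra.
  - apply (subspaceD _ _ HN); [|apply (subspaceZ _ _ HN)]; assumption.
Qed.

Lemma head_elim_notin : ~ N e -> ~ N' (elim e).
Proof.
  intros He He'. apply He.
  apply (subspace_ext _ _ HN (vadd (vcons 0 (elim e)) (vscale (e O) w))).
  - intros [|i] _; unfold elim, vadd, vscale, shift; simpl; [|lra].
    rewrite (w_head e (or_intror eq_refl)) at 2. lra.
  - apply (subspaceD _ _ HN); [|apply (subspaceZ _ _ HN)]; assumption.
Qed.

Lemma dot_head_elim a' x :
  dot (S m) (vcons (- dot m a' (shift w)) a') x = dot m a' (elim x).
Proof.
  unfold elim. change (shift (vadd x (vscale (- x O) w)))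
    with (vadd (shift x) (vscale (- x O) (shift w))).
  rewrite dot_vcons, dot_plus, dot_scale. lra.
Qed.

Lemma separation_head_elim :
  (forall e', ~ N' e' -> exists a', separates m N' e' a') ->
  ~ N e -> exists a, separates (S m) N e a.
Proof.
  intros IH He.
  destruct (IH _ (head_elim_notin He)) as [a' [Ha'N Ha'e]].
  exists (vcons (- dot m a' (shift w)) a'). split.
  - intros z Hz. rewrite dot_head_elim. apply Ha'N, head_elim_in, Hz.
  - rewrite dot_head_elim. exact Ha'e.
Qed.
End HeadElimination.

Theorem exists_separating_functional m :
  forall N e, subspace m N -> ~ N e -> exists a, separates m N e a.
Proof.
  induction m as [|m IH]; intros N e HN He.
  - exfalso. apply He, (subspace_ext _ _ HN (fun _ => 0)); [lia | apply HN].
  - assert (IH' := fun e' => IH _ e' (subspace_tail m N HN)).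
    destruct (classic (exists v, N v /\ v O <> 0)) as [[v [Hv Hv0]] | Hnone].
    + apply (separation_head_elim m N (vscale (/ v O) v) e HN);
        [apply HN; exact Hv | | exact IH' | exact He].
      intros x _. unfold vscale. rewrite Rinv_l by exact Hv0. lra.
    + assert (N_head : forall z, N z -> z O = 0).
      { intros z Hz. apply NNPP. intros Hz0. apply Hnone. exists z. auto. }
      destruct (Req_dec (e O) 0) as [He0 | He0].
      * apply (separation_head_elim m N (fun _ => 0) e HN);
          [apply HN | | exact IH' | exact He].
        intros x [Hx | ->]; [rewrite (N_head x Hx) | rewrite He0]; lra.
      * exists (unitv 0). split.
        -- intros z Hz. cbn [unitv]. rewrite dot_vcons, dot_0l, (N_head z Hz). lra.
        -- cbn [unitv]. rewrite dot_vcons, dot_0l. lra.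
Qed.

Lemma plus_swap_mid {A : AbelianMonoid} (a b c d : A) :
  plus (plus a b) (plus c d) = plus (plus a c) (plus b d).
Proof.
  rewrite <- !plus_assoc. f_equal. rewrite !plus_assoc, (plus_comm b c). reflexivity.
Qed.

Section AbelianGroupIdentities.
Context {A : AbelianGroup}.

Lemma minus_plus_plus (a b c d : A) :
  minus (plus a b) (plus c d) = plus (minus a c) (minus b d).
Proof. unfold minus. rewrite opp_plus. apply plus_swap_mid. Qed.

Lemma minus_opp_opp (a b : A) : minus (opp a) (opp b) = opp (minus a b).
Proof. rewrite opp_minus. unfold minus. rewrite opp_opp. apply plus_comm. Qed.

Lemma minus_eq_zero_eq (a b : A) : minus a b = zero -> a = b.
Proof.
  intros H. apply (plus_reg_r (opp b)). rewrite plus_opp_r. exact H.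
Qed.

Lemma plus_eq_zero_opp (a b : A) : plus a b = zero -> a = opp b.
Proof.
  intros H. rewrite <- (plus_zero_r a), <- (plus_opp_r b), plus_assoc, H. apply plus_zero_l.
Qed.

Lemma minus_minus_cocycle (x y w z : A) :
  minus (minus x z) (plus (minus y z) (minus w z)) = minus (minus x w) (minus y z).
Proof.
  rewrite (minus_trans w x z), minus_plus_plus, minus_eq_zero, plus_zero_r.
  reflexivity.
Qed.
End AbelianGroupIdentities.

Section Norms.
Context {K : AbsRing} {V : ModuleSpace K} {nrm : V -> R} (Hnrm : is_norm nrm).

Lemma is_norm_ge0 v : 0 <= nrm v.
Proof. apply Hnrm. Qed.

Lemma is_norm_zero : nrm zero = 0.
Proof. apply Hnrm. reflexivity. Qed.

Lemma is_norm_pos v : v <> zero -> 0 < nrm v.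
Proof.
  intros Hv. destruct (is_norm_ge0 v) as [| H0]; [assumption|].
  exfalso. apply Hv, Hnrm. auto.
Qed.

Lemma is_norm_scal k v : nrm (scal k v) = abs k * nrm v.
Proof. apply Hnrm. Qed.

Lemma is_norm_triangle v w : nrm (plus v w) <= nrm v + nrm w.
Proof. apply Hnrm. Qed.

(* Rewriting with Coquelicot's abelian-group lemmas inside a module needs the group
   [ModuleSpace.AbelianGroup _ V] to be given explicitly. *)
Lemma is_norm_le_minus v w : nrm v <= nrm (minus v w) + nrm w.
Proof.
  rewrite <- (@minus_zero_r (ModuleSpace.AbelianGroup _ V) v) at 1.
  rewrite (minus_trans w), (@minus_zero_r (ModuleSpace.AbelianGroup _ V) w).
  apply is_norm_triangle.
Qed.

Lemma is_norm_opp v : nrm (opp v) = nrm v.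
Proof. rewrite <- scal_opp_one, is_norm_scal, abs_opp_one. lra. Qed.

Lemma is_norm_minus_sym v w : nrm (minus v w) = nrm (minus w v).
Proof. rewrite <- opp_minus. apply is_norm_opp. Qed.
End Norms.

Record real_embedding {K : AbsRing} (iota : R -> K) : Prop := {
  iota_plus : forall r s, iota (r + s) = plus (iota r) (iota s);
  iota_mult : forall r s, iota (r * s) = mult (iota r) (iota s);
  iota_one : iota 1 = one;
  iota_abs : forall r, abs (iota r) = Rabs r
}.

Lemma real_embedding_R : real_embedding (K := R_AbsRing) (fun r => r).
Proof. split; reflexivity. Qed.

Lemma real_embedding_C : real_embedding (K := C_AbsRing) RtoC.
Proof. split; [exact RtoC_plus | exact RtoC_mult | reflexivity | exact Cmod_R]. Qed.

Fixpoint lincomb {K : AbsRing} (iota : R -> K) {V : ModuleSpace K}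
    (L : list V) (x : nat -> R) : V :=
  match L with
  | nil => zero
  | v :: L' => plus (scal (iota (x O)) v) (lincomb iota L' (shift x))
  end.

Fixpoint msum {K : AbsRing} {V : ModuleSpace K} (nrm : V -> R) (L : list V) : R :=
  match L with nil => 0 | v :: L' => nrm v + msum nrm L' end.

Section RealCombinations.
Context {K : AbsRing} {iota : R -> K} (Hiota : real_embedding iota) {V : ModuleSpace K}.

Lemma iota_eq0 r : iota r = zero <-> r = 0.
Proof.
  split; intros H.
  - apply Rabs_eq_0. rewrite <- (iota_abs _ Hiota), H. apply abs_zero.
  - apply abs_eq_zero. rewrite (iota_abs _ Hiota), H. apply Rabs_R0.
Qed.

Lemma scal_iota0 (v : V) : scal (iota 0) v = zero.
Proof. rewrite (proj2 (iota_eq0 0) eq_refl). exact (scal_zero_l v). Qed.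

Lemma iota_m1 : iota (-1) = opp one.
Proof.
  apply (@plus_eq_zero_opp (Ring.AbelianGroup (AbsRing.Ring K))).
  rewrite <- (iota_one _ Hiota), <- (iota_plus _ Hiota).
  apply iota_eq0. lra.
Qed.

Lemma scal_iota_m1 (v : V) : scal (iota (-1)) v = opp v.
Proof. rewrite iota_m1. exact (scal_opp_one v). Qed.

Lemma lincomb_plus (L : list V) : forall x y,
  lincomb iota L (vadd x y) = plus (lincomb iota L x) (lincomb iota L y).
Proof.
  induction L as [|v L IH]; intros x y; simpl.
  - rewrite plus_zero_r. reflexivity.
  - change (shift (vadd x y)) with (vadd (shift x) (shift y)).
    rewrite IH. unfold vadd at 1. rewrite (iota_plus _ Hiota), (scal_distr_r (iota (x O))).
    apply plus_swap_mid.
Qed.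

Lemma lincomb_scale (L : list V) : forall c x,
  lincomb iota L (vscale c x) = scal (iota c) (lincomb iota L x).
Proof.
  induction L as [|v L IH]; intros c x; simpl.
  - rewrite scal_zero_r. reflexivity.
  - change (shift (vscale c x)) with (vscale c (shift x)).
    rewrite IH, scal_distr_l, scal_assoc. unfold vscale.
    rewrite (iota_mult _ Hiota). reflexivity.
Qed.

Lemma lincomb_ext (L : list V) : forall x y,
  (forall i, (i < length L)%nat -> x i = y i) -> lincomb iota L x = lincomb iota L y.
Proof.
  induction L as [|v L IH]; intros x y Hxy; simpl; [reflexivity|].
  rewrite (Hxy O) by (simpl; lia). f_equal. apply IH.
  intros i Hi. apply Hxy. simpl. lia.
Qed.

Lemma lincomb_0 (L : list V) : lincomb iota L (fun _ => 0) = zero.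
Proof.
  induction L as [|v L IH]; simpl; [reflexivity|].
  change (shift (fun _ => 0)) with (fun _ : nat => 0).
  rewrite IH, scal_iota0, plus_zero_r. reflexivity.
Qed.

Lemma lincomb_unitv (L : list V) d : forall i,
  (i < length L)%nat -> lincomb iota L (unitv i) = nth i L d.
Proof.
  induction L as [|v L IH]; intros [|i] Hi; simpl in *; try lia.
  - change (shift (vcons 1 (fun _ => 0))) with (fun _ : nat => 0).
    rewrite lincomb_0, (iota_one _ Hiota), scal_one, plus_zero_r. reflexivity.
  - change (shift (vcons 0 (unitv i))) with (unitv i).
    rewrite IH by lia. rewrite scal_iota0, plus_zero_l. reflexivity.
Qed.

Lemma msum_ge0 (nrm : V -> R) L : is_norm nrm -> 0 <= msum nrm L.
Proof.
  intros Hnrm. induction L as [|v L IH]; simpl; [lra|].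
  pose proof (is_norm_ge0 Hnrm v). lra.
Qed.

Lemma is_norm_le_msum (nrm : V -> R) L v : is_norm nrm -> In v L -> nrm v <= msum nrm L.
Proof.
  intros Hnrm. induction L as [|w L IH]; simpl; [tauto|].
  pose proof (is_norm_ge0 Hnrm w). pose proof (msum_ge0 nrm L Hnrm).
  intros [-> | Hv]; [| specialize (IH Hv)]; lra.
Qed.

Lemma is_norm_lincomb_le (L : list V) x : exists c,
  forall nrm, is_norm nrm -> nrm (lincomb iota L x) <= c * msum nrm L.
Proof.
  revert x. induction L as [|v L IH]; intros x; simpl.
  - exists 0. intros nrm Hnrm. rewrite (is_norm_zero Hnrm). lra.
  - destruct (IH (shift x)) as [c Hc]. exists (Rabs (x O) + Rabs c).
    intros nrm Hnrm.
    eapply Rle_trans; [apply (is_norm_triangle Hnrm)|].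
    rewrite (is_norm_scal Hnrm), (iota_abs _ Hiota).
    specialize (Hc nrm Hnrm).
    pose proof (is_norm_ge0 Hnrm v). pose proof (msum_ge0 nrm L Hnrm).
    pose proof (Rabs_pos (x O)). pose proof (Rle_abs c). pose proof (Rabs_pos c).
    nra.
Qed.
End RealCombinations.

Definition negligible (f M : nat -> R) : Prop :=
  forall eps, 0 < eps -> eventually (fun n => f n <= eps * M n).

Section Negligible.
Variable M : nat -> R.
Hypothesis M_ge0 : forall n, 0 <= M n.

Lemma negligible_le f g :
  eventually (fun n => f n <= g n) -> negligible g M -> negligible f M.
Proof.
  intros Hfg Hg eps Heps.
  apply (filter_imp (fun n => f n <= g n /\ g n <= eps * M n)).
  - intros n [H1 H2]. lra.
  - apply filter_and; [exact Hfg | apply Hg, Heps].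
Qed.

Lemma negligible_0 : negligible (fun _ => 0) M.
Proof.
  intros eps Heps. exists O. intros n _. pose proof (M_ge0 n). nra.
Qed.

Lemma negligible_plus f g :
  negligible f M -> negligible g M -> negligible (fun n => f n + g n) M.
Proof.
  intros Hf Hg eps Heps.
  apply (filter_imp (fun n => f n <= eps / 2 * M n /\ g n <= eps / 2 * M n)).
  - intros n [Hfn Hgn]. lra.
  - apply filter_and; [apply Hf | apply Hg]; lra.
Qed.

Lemma negligible_bigO f g c :
  negligible f g -> eventually (fun n => g n <= c * M n) -> negligible f M.
Proof.
  intros Hf Hg eps Heps.
  pose proof (Rabs_pos c). pose proof (Rle_abs c).
  set (eps' := eps / (Rabs c + 1)).
  assert (Heps' : 0 < eps') by (apply Rdiv_lt_0_compat; lra).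
  assert (eps' * Rabs c = eps - eps') by (unfold eps'; field; lra).
  apply (filter_imp (fun n => f n <= eps' * g n /\ g n <= c * M n)).
  - intros n [Hfn Hgn]. pose proof (M_ge0 n).
    assert (g n <= Rabs c * M n) by nra.
    nra.
  - apply filter_and; [apply Hf, Heps' | exact Hg].
Qed.

Lemma negligible_scal c f : 0 <= c -> negligible f M -> negligible (fun n => c * f n) M.
Proof.
  intros Hc Hf eps Heps.
  assert (Heps' : 0 < eps / (c + 1)) by (apply Rdiv_lt_0_compat; lra).
  apply (filter_imp (fun n => f n <= eps / (c + 1) * M n)); [|apply Hf, Heps'].
  intros n Hn. pose proof (M_ge0 n).
  assert (c * f n <= c * (eps / (c + 1) * M n)) by (apply Rmult_le_compat_l; lra).
  assert (c * (eps / (c + 1) * M n) = eps * M n - eps / (c + 1) * M n) by (field; lra).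
  assert (0 <= eps / (c + 1) * M n) by nra.
  lra.
Qed.

Lemma negligible_self_pos : (forall n, 0 < M n) -> ~ negligible M M.
Proof.
  intros Mpos HM. destruct (HM (1 / 2) ltac:(lra)) as [N HN].
  specialize (HN N (le_n N)). specialize (Mpos N). lra.
Qed.
End Negligible.

Definition close {K : AbsRing} {V : ModuleSpace K} (nrm : nat -> V -> R) (M : nat -> R)
  (v w : V) : Prop :=
  negligible (fun n => nrm n (minus v w)) M.

Section Close.
Context {K : AbsRing} {V : ModuleSpace K} {nrm : nat -> V -> R}.
Hypothesis Hnrm : forall n, is_norm (nrm n).
Context {M : nat -> R}.
Hypothesis M_ge0 : forall n, 0 <= M n.

Lemma close_refl v : close nrm M v v.
Proof.
  apply (negligible_le M _ (fun _ => 0)); [| apply negligible_0, M_ge0].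
  exists O. intros n _. rewrite minus_eq_zero. apply Req_le, (is_norm_zero (Hnrm n)).
Qed.

Lemma close_sym v w : close nrm M v w -> close nrm M w v.
Proof.
  apply negligible_le. exists O. intros n _.
  rewrite (is_norm_minus_sym (Hnrm n)). lra.
Qed.

Lemma close_trans u v w : close nrm M u v -> close nrm M v w -> close nrm M u w.
Proof.
  intros Huv Hvw. eapply negligible_le; [| exact (negligible_plus _ _ _ Huv Hvw)].
  exists O. intros n _. rewrite (minus_trans v). apply (is_norm_triangle (Hnrm n)).
Qed.

Lemma close_plus a b c d :
  close nrm M a b -> close nrm M c d -> close nrm M (plus a c) (plus b d).
Proof.
  intros Hab Hcd. eapply negligible_le; [| exact (negligible_plus _ _ _ Hab Hcd)].
  exists O. intros n _. rewrite (@minus_plus_plus (ModuleSpace.AbelianGroup _ V)).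
  apply (is_norm_triangle (Hnrm n)).
Qed.

Lemma close_opp a b : close nrm M a b -> close nrm M (opp a) (opp b).
Proof.
  apply negligible_le. exists O. intros n _.
  rewrite minus_opp_opp, (is_norm_opp (Hnrm n)). lra.
Qed.

Lemma close_scal k a b : close nrm M a b -> close nrm M (scal k a) (scal k b).
Proof.
  intros Hab.
  eapply negligible_le; [| exact (negligible_scal M M_ge0 _ _ (abs_ge_0 k) Hab)].
  exists O. intros n _. rewrite <- scal_minus_distr_l, (is_norm_scal (Hnrm n)). lra.
Qed.

Lemma close_minus_zero a b : close nrm M a b -> close nrm M (minus a b) zero.
Proof.
  apply negligible_le. exists O. intros n _.
  rewrite (@minus_zero_r (ModuleSpace.AbelianGroup _ V)). lra.
Qed.

Lemma negligible_msum L :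
  (forall v, In v L -> close nrm M v zero) -> negligible (fun n => msum (nrm n) L) M.
Proof.
  induction L as [|v L IH]; intros HL; simpl.
  - apply negligible_0, M_ge0.
  - apply negligible_plus.
    + eapply negligible_le; [| apply (HL v (or_introl eq_refl))].
      exists O. intros n _. rewrite (@minus_zero_r (ModuleSpace.AbelianGroup _ V)). lra.
    + apply IH. intros w Hw. apply HL. right. exact Hw.
Qed.
End Close.

Section QuasiAdditive.
Context {K : AbsRing} {iota : R -> K} (Hiota : real_embedding iota).
Context {V : ModuleSpace K} {nrm : nat -> V -> R}.
Hypothesis Hnrm : forall n, is_norm (nrm n).
Variables (G : Group) (S : list (gcar G)).
Hypothesis HS : forall g, generated G S g.
Variable u : gcar G -> V.
Hypothesis u_one : u (gone G) = zero.
Hypothesis u_mul : forall g h,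
  negligible (fun n => nrm n (minus (u (gmul G g h)) (plus (u g) (u h))))
             (fun n => nrm n (u h)).
Variable s0 : gcar G.
Hypotheses (Hs0 : In s0 S) (us0 : u s0 <> zero).

Let L := map u S.
Let M n := msum (nrm n) L.
Let cb := lincomb iota L.
Let represents g x := close nrm M (u g) (cb x).
Let negligible_comb z := close nrm M (cb z) zero.

Let M_ge0 n : 0 <= M n.
Proof. apply msum_ge0, Hnrm. Qed.

Lemma msum_pos n : 0 < M n.
Proof.
  apply (Rlt_le_trans _ (nrm n (u s0))).
  - apply (is_norm_pos (Hnrm n)), us0.
  - apply is_norm_le_msum; [apply Hnrm | apply in_map, Hs0].
Qed.

Lemma represents_bigO h x :
  represents h x -> exists c, eventually (fun n => nrm n (u h) <= c * M n).
Proof.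
  intros Hx. destruct (is_norm_lincomb_le Hiota L x) as [c Hc].
  exists (1 + c). apply (filter_imp (fun n => nrm n (minus (u h) (cb x)) <= 1 * M n)).
  - intros n Hn. pose proof (is_norm_le_minus (Hnrm n) (u h) (cb x)).
    pose proof (Hc (nrm n) (Hnrm n)). unfold cb, M in *. lra.
  - apply Hx. lra.
Qed.

Lemma represents_mul_close g h x :
  represents h x -> close nrm M (u (gmul G g h)) (plus (u g) (u h)).
Proof.
  intros Hx. destruct (represents_bigO h x Hx) as [c Hc].
  exact (negligible_bigO M M_ge0 _ _ c (u_mul g h) Hc).
Qed.

Lemma represents_one : represents (gone G) (fun _ => 0).
Proof.
  unfold represents, cb. rewrite u_one, (lincomb_0 Hiota). apply close_refl; assumption.
Qed.

Lemma represents_mul g h x y :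
  represents g x -> represents h y -> represents (gmul G g h) (vadd x y).
Proof.
  intros Hx Hy. unfold represents, cb. rewrite (lincomb_plus Hiota).
  apply (close_trans Hnrm _ _ _ (represents_mul_close g h y Hy)).
  apply close_plus; assumption.
Qed.

Lemma represents_inv g x : represents g x -> represents (ginv G g) (vscale (-1) x).
Proof.
  intros Hx. unfold represents, cb. rewrite (lincomb_scale Hiota), (scal_iota_m1 Hiota).
  assert (Hinv : close nrm M zero (plus (u (ginv G g)) (u g))).
  { rewrite <- u_one, <- (gmul_Vl G g). exact (represents_mul_close _ _ x Hx). }
  assert (Hopp := close_plus Hnrm _ _ _ _ Hinv (close_refl Hnrm M_ge0 (opp (u g)))).
  rewrite plus_zero_l, <- plus_assoc, (@plus_opp_r (ModuleSpace.AbelianGroup _ V)),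
    plus_zero_r in Hopp.
  apply (close_trans Hnrm _ _ _ (close_sym Hnrm _ _ Hopp)).
  apply close_opp; assumption.
Qed.

Lemma represents_generator i :
  (i < length S)%nat -> represents (nth i S s0) (unitv i).
Proof.
  intros Hi. unfold represents, cb.
  rewrite (lincomb_unitv Hiota L (u s0)) by (unfold L; rewrite length_map; exact Hi).
  unfold L. rewrite map_nth. apply close_refl; assumption.
Qed.

Lemma represents_exists g : exists x, represents g x.
Proof.
  induction (HS g) as [s Hs | | g h _ [x Hx] _ [y Hy] | g _ [x Hx]].
  - destruct (In_nth S s s0 Hs) as [i [Hi <-]].
    exists (unitv i). apply represents_generator, Hi.
  - exists (fun _ => 0). apply represents_one.
  - exists (vadd x y). apply represents_mul; assumption.
  - exists (vscale (-1) x). apply represents_inv, Hx.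
Qed.

Lemma negligible_comb_subspace : subspace (length S) negligible_comb.
Proof.
  unfold negligible_comb, cb. split.
  - rewrite (lincomb_0 Hiota). apply close_refl; assumption.
  - intros x y Hx Hy. rewrite (lincomb_plus Hiota), <- (plus_zero_l zero).
    apply close_plus; assumption.
  - intros c x Hx. rewrite (lincomb_scale Hiota), <- (scal_zero_r (iota c)).
    apply close_scal; assumption.
  - intros x y Hxy. rewrite (lincomb_ext L x y); [tauto|].
    unfold L. rewrite length_map. exact Hxy.
Qed.

Lemma represents_diff g x y :
  represents g x -> represents g y -> negligible_comb (vadd x (vscale (-1) y)).
Proof.
  intros Hx Hy. unfold negligible_comb, cb.
  rewrite (lincomb_plus Hiota), (lincomb_scale Hiota), (scal_iota_m1 Hiota).
  apply close_minus_zero.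
  exact (close_trans Hnrm _ _ _ (close_sym Hnrm _ _ Hx) Hy).
Qed.

Lemma exists_generator_not_negligible :
  exists i, (i < length S)%nat /\ ~ negligible_comb (unitv i).
Proof.
  apply NNPP. intros Hnone.
  apply (negligible_self_pos M msum_pos).
  apply (negligible_msum M_ge0). intros v Hv.
  destruct (In_nth L v zero Hv) as [i [Hi <-]].
  unfold L in Hi. rewrite length_map in Hi.
  rewrite <- (lincomb_unitv Hiota) by (unfold L; rewrite length_map; exact Hi).
  apply NNPP. intros Hi'. apply Hnone. exists i. auto.
Qed.

Theorem exists_additive_of_quasi_additive : exists phi : gcar G -> R,
  (forall g h, phi (gmul G g h) = phi g + phi h) /\ exists g, phi g <> 0.
Proof.
  destruct exists_generator_not_negligible as [i [Hi Hni]].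
  destruct (exists_separating_functional _ _ _ negligible_comb_subspace Hni)
    as [a [Ha_neg Ha_i]].
  assert (phi_wd : forall g x y, represents g x -> represents g y ->
            dot (length S) a x = dot (length S) a y).
  { intros g x y Hx Hy. pose proof (Ha_neg _ (represents_diff g x y Hx Hy)) as H.
    rewrite dot_plus, dot_scale in H. lra. }
  pose (rep g := proj1_sig (constructive_indefinite_description _ (represents_exists g))).
  assert (Hrep : forall g, represents g (rep g))
    by (intros g; exact (proj2_sig (constructive_indefinite_description _ _))).
  exists (fun g => dot (length S) a (rep g)). split.
  - intros g h. rewrite <- dot_plus.
    apply (phi_wd (gmul G g h)); [apply Hrep | apply represents_mul; apply Hrep].
  - exists (nth i S s0).
    rewrite (phi_wd _ _ (unitv i) (Hrep _) (represents_generator i Hi)). exact Ha_i.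
Qed.
End QuasiAdditive.

Lemma is_linear_minus {K : AbsRing} {V W : ModuleSpace K} (f : V -> W) (x y : V) :
  is_linear f -> f (minus x y) = minus (f x) (f y).
Proof.
  intros [Hplus Hscal]. unfold minus.
  rewrite Hplus, <- (scal_opp_one y), Hscal, scal_opp_one. reflexivity.
Qed.

Lemma eventually_lt_of_LimSup_le (f : nat -> R) (l r : R) :
  Rbar_le (LimSup_seq f) (Finite l) -> l < r -> eventually (fun n => f n < r).
Proof.
  intros Hf Hlr. destruct (ex_LimSup_seq f) as [ls Hls].
  rewrite (is_LimSup_seq_unique _ _ Hls) in Hf.
  destruct ls as [x | |]; simpl in Hf, Hls.
  - destruct (Hls (mkposreal (r - x) ltac:(lra))) as [_ [N HN]].
    exists N. intros n Hn. specialize (HN n Hn). simpl in HN. lra.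
  - contradiction.
  - apply Hls.
Qed.

Section DifferentialCategory.
Context {K : AbsRing} {C B : VCategory K} {nrmB : cat_norm B} {D : Functor C B}.
Hypotheses (HC : right_linear C) (HnrmB : is_cat_norm B nrmB) (HD : linear_functor D).
Variable nrms : nat -> cat_norm C.
Hypothesis Hnrms : forall n, (1 <= n)%nat -> is_cat_norm C (nrms n).
Hypothesis Hlim : forall a a' a'' (c : Hom C a' a'') (c' c'' : Hom C a a'),
  c' <> c'' ->
  Rbar_le
    (LimSup_seq (fun n => nrms n a a'' (minus (comp C c c') (comp C c c''))
                          / nrms n a a' (minus c' c'')))
    (Finite (nrmB _ _ (Fmor D c))).

(* Evaluated at [S n]: the [nrms n] are only assumed to be norms for [n >= 1]. *)
Lemma comp_null_eventually a a' a'' (d : Hom C a' a'') (c' c'' : Hom C a a') eps :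
  Fmor D d = zero -> 0 < eps ->
  eventually (fun n => nrms (S n) a a'' (minus (comp C d c') (comp C d c''))
                       <= eps * nrms (S n) a a' (minus c' c'')).
Proof.
  intros Hd Heps. destruct (classic (c' = c'')) as [<- | Hne].
  - exists O. intros n _. rewrite !minus_eq_zero.
    apply (Rle_trans _ 0).
    { apply Req_le, (is_norm_zero (Hnrms (S n) ltac:(lia) a a'')). }
    apply Rmult_le_pos; [lra | apply (is_norm_ge0 (Hnrms (S n) ltac:(lia) a a'))].
  - assert (Hratio := Hlim a a' a'' d c' c'' Hne).
    rewrite Hd, (is_norm_zero (HnrmB _ _)) in Hratio.
    destruct (eventually_lt_of_LimSup_le _ _ _ Hratio Heps) as [N HN].
    exists N. intros n Hn. specialize (HN (S n) ltac:(lia)). simpl in HN.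
    assert (Hpos : 0 < nrms (S n) a a' (minus c' c'')).
    { apply (is_norm_pos (Hnrms (S n) ltac:(lia) a a')).
      intros H. apply Hne, minus_eq_zero_eq, H. }
    apply Rlt_le. apply (Rmult_lt_reg_r (/ nrms (S n) a a' (minus c' c''))).
    + apply Rinv_0_lt_compat, Hpos.
    + rewrite Rmult_assoc, Rinv_r, Rmult_1_r by lra. exact HN.
Qed.

Variables (G : Group) (a : Obj C) (Rp : gcar G -> Hom C a a).
Hypothesis Hrep : is_representation G C a Rp.
Hypothesis HtrivD : trivial_rep G B (Fob D a) (fun g => Fmor D (Rp g)).

Let du g := minus (Rp g) (idm C a).

Lemma rep_minus_idm_one : du (gone G) = zero.
Proof. unfold du. rewrite (proj1 Hrep). exact (minus_eq_zero _). Qed.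

Lemma rep_minus_idm_quasi_additive g h :
  negligible (fun n => nrms (S n) a a (minus (du (gmul G g h)) (plus (du g) (du h))))
             (fun n => nrms (S n) a a (du h)).
Proof.
  intros eps Heps.
  assert (Hd : Fmor D (du g) = zero).
  { unfold du. rewrite (is_linear_minus _ _ _ (HD a a)), HtrivD, (Fid _ _ D).
    exact (minus_eq_zero _). }
  assert (Hcomp : forall c : Hom C a a, comp C (du g) c = minus (comp C (Rp g) c) c).
  { intros c. unfold du.
    rewrite (is_linear_minus (fun f => comp C f c) _ _ (proj1 HC a a a c)), (comp_id_l _ C).
    reflexivity. }
  assert (Hcocycle : minus (du (gmul G g h)) (plus (du g) (du h))
                     = minus (comp C (du g) (Rp h)) (comp C (du g) (idm C a))).
  { unfold du at 1 2 3. rewrite !Hcomp, (comp_id_r _ C), (proj2 Hrep).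
    apply minus_minus_cocycle. }
  rewrite Hcocycle. exact (comp_null_eventually _ _ _ _ _ _ eps Hd Heps).
Qed.
End DifferentialCategory.

Lemma rep_trivial_of_generators (G : Group) (S : list (gcar G))
    {K : AbsRing} (C : VCategory K) (a : Obj C) (Rp : gcar G -> Hom C a a) :
  (forall g, generated G S g) -> is_representation G C a Rp ->
  (forall s, In s S -> Rp s = idm C a) -> trivial_rep G C a Rp.
Proof.
  intros HS [Rp_one Rp_mul] HRS g.
  induction (HS g) as [s Hs | | g h _ IHg _ IHh | g _ IHg].
  - apply HRS, Hs.
  - exact Rp_one.
  - rewrite Rp_mul, IHg, IHh. apply (comp_id_l _ C).
  - transitivity (comp C (Rp (ginv G g)) (Rp g)).
    + rewrite IHg. symmetry. apply (comp_id_r _ C).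
    + rewrite <- Rp_mul, (gmul_Vl G). exact Rp_one.
Qed.

Theorem representation_trichotomy {K : AbsRing} {iota : R -> K}
    (Hiota : real_embedding iota) :
  forall (G : Group), finitely_generated G ->
  forall (C B : VCategory K) (nrmB : cat_norm B) (D : Functor C B),
    differential_category C B nrmB D ->
  forall (a : Obj C) (Rp : gcar G -> Hom C a a),
    is_representation G C a Rp ->
    trivial_rep G C a Rp
    \/ ~ trivial_rep G B (Fob D a) (fun g => Fmor D (Rp g))
    \/ exists phi : gcar G -> K, additive_hom G phi /\ exists g, phi g <> zero.
Proof.
  intros G [gens HS] C B nrmB D [HC [[_ [HnrmB _]] [HD [nrms [Hnrms Hlim]]]]] a Rp Hrep.
  destruct (classic (trivial_rep G C a Rp)) as [Htriv | Hntriv]; [left; exact Htriv |].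
  destruct (classic (trivial_rep G B (Fob D a) (fun g => Fmor D (Rp g))))
    as [HtrivD | HntrivD]; [| right; left; exact HntrivD].
  right; right.
  assert (Hs0 : exists s0, In s0 gens /\ Rp s0 <> idm C a).
  { apply NNPP. intros Hnone.
    apply Hntriv, (rep_trivial_of_generators G gens); [exact HS | exact Hrep |].
    intros s Hs. apply NNPP. intros Hne. apply Hnone. exists s. auto. }
  destruct Hs0 as [s0 [Hs0 Hns0]].
  destruct (exists_additive_of_quasi_additive Hiota
              (fun n => Hnrms (S n) ltac:(lia) a a) G gens HS
              (fun g => minus (Rp g) (idm C a))
              (rep_minus_idm_one G a Rp Hrep)
              (rep_minus_idm_quasi_additive HC HnrmB HD nrms Hnrms Hlim G a Rp Hrep HtrivD)
              s0 Hs0 (fun H => Hns0 (minus_eq_zero_eq _ _ H)))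
    as [phi [Hphi [g Hg]]].
  exists (fun g => iota (phi g)). split.
  - intros x y. simpl. rewrite Hphi. apply (iota_plus _ Hiota).
  - exists g. rewrite (iota_eq0 Hiota). exact Hg.
Qed.

Theorem theorem3p17 :
  forall (K : AbsRing), (K = R_AbsRing \/ K = C_AbsRing) ->
  forall (G : Group), finitely_generated G ->
  forall (C B : VCategory K) (nrmB : cat_norm B) (D : Functor C B),
    differential_category C B nrmB D ->
  forall (a : Obj C) (Rp : gcar G -> Hom C a a),
    is_representation G C a Rp ->
    trivial_rep G C a Rp
    \/ ~ trivial_rep G B (Fob D a) (fun g => Fmor D (Rp g))
    \/ exists phi : gcar G -> K, additive_hom G phi /\ exists g, phi g <> zero.
Proof.
  intros K [-> | ->].
  - exact (representation_trichotomy real_embedding_R).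
  - exact (representation_trichotomy real_embedding_C).
Qed.
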